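(* Let $\alpha\in[0,1]$. (a) If $G$ is any graph and $H_1,H_2$ are $A_\alpha$-cospectral graphs with $\Gamma_{A_\alpha(H_1)}(x)=\Gamma_{A_\alpha(H_2)}(x)$, then $G\vee H_1$ and $G\vee H_2$ are $A_\alpha$-cospectral. (b) If $G_1,G_2$ are $A_\alpha$-cospectral graphs with $\Gamma_{A_\alpha(G_1)}(x)=\Gamma_{A_\alpha(G_2)}(x)$ and $H_1,H_2$ are $A_\alpha$-cospectral graphs with $\Gamma_{A_\alpha(H_1)}(x)=\Gamma_{A_\alpha(H_2)}(x)$, then $G_1\vee H_1$ and $G_2\vee H_2$ are $A_\alpha$-cospectral.
   Context: All graphs are finite, simple and undirected. For a graph $G$, $A(G)$ is its adjacency matrix, $D(G)$ its diagonal degree matrix, and $A_\alpha(G)=\alpha D(G)+(1-\alpha)A(G)$. Two graphs are $A_\alpha$-cospectral if $A_\alpha$ of each has the same multiset of eigenvalues. For an $n\times n$ matrix $M$, its coronal is $\Gamma_M(x)=\mathbf{1}_n^T(xI_n-M)^{-1}\mathbf{1}_n$ (a rational function of $x$), with $\mathbf{1}_n$ the all-ones vector. $G\vee H$ denotes the join: the disjoint union of $G$ and $H$ with all edges between $V(G)$ and $V(H)$ added. *)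

From HB Require Import structures.
From mathcomp Require Import all_boot all_order all_algebra.
Set Implicit Arguments. Unset Strict Implicit. Unset Printing Implicit Defensive.
Import Order.TTheory GRing.Theory Num.Theory.
Local Open Scope ring_scope.

Definition is_graph (n : nat) (e : rel 'I_n) : Prop :=
  symmetric e /\ irreflexive e.

Definition adjmx (R : nzRingType) (n : nat) (e : rel 'I_n) : 'M[R]_n :=
  \matrix_(i, j) (e i j)%:R.

Definition degmx (R : nzRingType) (n : nat) (e : rel 'I_n) : 'M[R]_n :=
  \matrix_(i, j) ((i == j)%:R * (#|[set k | e i k]|)%:R).

Definition Aalpha (R : nzRingType) (alpha : R) (n : nat) (e : rel 'I_n) : 'M[R]_n :=
  alpha *: degmx R e + (1 - alpha) *: adjmx R e.

(* Join G \/ H on 'I_(n+m): G on the first n vertices, H on the last m,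
   all edges between the two parts. *)
Definition gjoin (n m : nat) (e : rel 'I_n) (f : rel 'I_m) : rel 'I_(n + m) :=
  fun i j => match split i, split j with
             | inl a, inl b => e a b
             | inr a, inr b => f a b
             | _, _ => true
             end.

(* Cospectral: same multiset of eigenvalues, i.e. same characteristic
   polynomial (the sizes may a priori differ; equality forces them equal). *)
Definition cospectral (R : comNzRingType) (n m : nat) (A : 'M[R]_n) (B : 'M[R]_m) : Prop :=
  char_poly A = char_poly B.

(* Coronal Gamma_M(x) = 1^T (xI - M)^{-1} 1, as an element of the field of
   rational functions R(x) = {fraction {poly R}}. *)
Definition coronal (R : idomainType) (n : nat) (M : 'M[R]_n) : {fraction {poly R}} :=
  let XM := map_mx (@tofrac _) (char_poly_mx M) in
  \sum_(i < n) \sum_(j < n) (invmx XM) i j.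

From HB Require Import structures.
From mathcomp Require Import all_boot all_order all_algebra.
From mathcomp Require Import ring.
Import Order.TTheory GRing.Theory Num.Theory.
Local Open Scope ring_scope.
Set Implicit Arguments. Unset Strict Implicit.

(* A_alpha of a join is the block matrix
   [[A_alpha(G) + alpha m I, (1 - alpha) J], [(1 - alpha) J, A_alpha(H) + alpha p I]].
   Eliminating the off-diagonal blocks leaves a rank-one correction of the
   Schur complement, so a block matrix with constant off-diagonal blocks a J, b J
   has characteristic polynomial phi_A phi_B - ab N_A N_B, where N_M = phi_M Gamma_M
   is the numerator of the coronal.  The diagonal shifts only substitute x - s
   for x in phi and N.  Hence phi of the join is determined by phi and Gamma of
   the two factors. *)

Local Notation "x %:F" := (@tofrac _ x).

Definition mxtotal (R : nmodType) m n (A : 'M[R]_(m, n)) : R :=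
  \sum_(i < m) \sum_(j < n) A i j.

Lemma mulmx_const1_total (R : comNzRingType) m n (A : 'M[R]_(m, n)) :
  (const_mx 1 : 'rV_m) *m A *m (const_mx 1 : 'cV_n) = (mxtotal A)%:M.
Proof.
apply/matrixP => i j; rewrite !ord1 !mxE eqxx mulr1n /mxtotal.
under eq_bigr => k _ do rewrite !mxE mulr1.
rewrite exchange_big; apply: eq_bigr => k _; apply: eq_bigr => l _.
by rewrite mxE mul1r.
Qed.

Lemma const_mx_mul1 (R : nzRingType) m n (a : R) :
  (const_mx a : 'M[R]_(m, n)) = a *: ((const_mx 1 : 'cV_m) *m (const_mx 1 : 'rV_n)).
Proof. by apply/matrixP => i j; rewrite !mxE big_ord1 !mxE !mulr1. Qed.

Lemma det_1B_mulmx (R : comNzRingType) m (w : 'cV[R]_m) (v : 'rV[R]_m) :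
  \det (1%:M - w *m v) = 1 - (v *m w) 0 0.
Proof.
have E1 : block_mx (1%:M : 'M_1) v w 1%:M =
    block_mx 1%:M 0 w 1%:M *m block_mx 1%:M v 0 (1%:M - w *m v).
  by rewrite mulmx_block !mulmx0 !mul0mx !mulmx1 !mul1mx ?addr0 ?add0r addrC subrK.
have E2 : block_mx (1%:M : 'M_1) v w 1%:M =
    block_mx (1%:M - v *m w) v 0 1%:M *m block_mx 1%:M 0 w 1%:M.
  by rewrite mulmx_block !mulmx0 !mul0mx !mulmx1 !mul1mx ?addr0 ?add0r subrK.
have := congr1 determinant E1; rewrite E2 !det_mulmx det_lblock !det_ublock.
by rewrite !det1 !mul1r !mulr1 det_mx11 !mxE => <-.
Qed.

Lemma det_block_const (R : comUnitRingType) p m (P : 'M[R]_p) (Q : 'M[R]_m)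
    (a b : R) :
  P \in unitmx -> Q \in unitmx ->
  \det (block_mx P (const_mx a) (const_mx b) Q) =
  \det P * \det Q * (1 - a * b * mxtotal (invmx P) * mxtotal (invmx Q)).
Proof.
move=> uP uQ.
set up := (const_mx 1 : 'cV[R]_p); set rp := (const_mx 1 : 'rV[R]_p).
set um := (const_mx 1 : 'cV[R]_m); set rm := (const_mx 1 : 'rV[R]_m).
have gP := mulmx_const1_total (invmx P); have gQ := mulmx_const1_total (invmx Q).
rewrite -/up -/rp in gP; rewrite -/um -/rm in gQ.
rewrite (const_mx_mul1 p m a) (const_mx_mul1 m p b) -/up -/rp -/um -/rm.
pose T := block_mx 1%:M (- (a *: (invmx P *m up *m rm))) 0 (1%:M : 'M[R]_m).
have detT : \det T = 1 by rewrite det_ublock !det1 mulr1.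
have schur : block_mx P (a *: (up *m rm)) (b *: (um *m rp)) Q *m T =
    block_mx P 0 (b *: (um *m rp))
      (Q - (a * b * mxtotal (invmx P)) *: (um *m rm)).
  rewrite mulmx_block !mulmx0 !mulmx1 !addr0; congr block_mx.
    by rewrite mulmxN -scalemxAr !mulmxA mulmxV // mul1mx addNr.
  rewrite addrC mulmxN -scalemxAr -scalemxAl !mulmxA -!(mulmxA um) gP.
  by rewrite mul_scalar_mx -scalemxAr !scalerA.
have := congr1 determinant schur; rewrite det_mulmx detT mulr1 => ->.
rewrite det_lblock -[RHS]mulrA; congr (_ * _).
have -> : Q - (a * b * mxtotal (invmx P)) *: (um *m rm) =
    Q *m (1%:M - ((a * b * mxtotal (invmx P)) *: (invmx Q *m um)) *m rm).
  by rewrite mulmxBr mulmx1 -scalemxAl -scalemxAr !mulmxA mulmxV // mul1mx.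
rewrite det_mulmx det_1B_mulmx; congr (_ * (1 - _)).
by rewrite -scalemxAr mxE mulmxA gQ mxE eqxx mulr1n.
Qed.

Definition coronal_num (R : comNzRingType) n (M : 'M[R]_n) : {poly R} :=
  mxtotal (\adj (char_poly_mx M)).

Lemma char_poly_mx_unit (R : idomainType) n (M : 'M[R]_n) :
  map_mx (@tofrac _) (char_poly_mx M) \in unitmx.
Proof.
by rewrite unitmxE det_map_mx unitfE tofrac_eq0 monic_neq0 ?char_poly_monic.
Qed.

Lemma coronalE (R : idomainType) n (M : 'M[R]_n) :
  coronal M = (coronal_num M)%:F / (char_poly M)%:F.
Proof.
rewrite /coronal /invmx char_poly_mx_unit det_map_mx -map_mx_adj.
rewrite /coronal_num /mxtotal [in RHS]rmorph_sum mulr_suml; apply: eq_bigr => i _.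
rewrite [in RHS]rmorph_sum mulr_suml; apply: eq_bigr => j _.
by rewrite !mxE mulrC.
Qed.

Lemma coronal_num_eq (R : idomainType) n (A B : 'M[R]_n) :
  char_poly A = char_poly B -> coronal A = coronal B ->
  coronal_num A = coronal_num B.
Proof.
move=> eAB; rewrite !coronalE eAB => /mulIf.
have nzB : ((char_poly B)%:F)^-1 != 0.
  by rewrite invr_eq0 tofrac_eq0 monic_neq0 ?char_poly_monic.
by move=> /(_ nzB)/eqP; rewrite tofrac_eq => /eqP.
Qed.

Lemma char_poly_block_const (R : idomainType) p m (A : 'M[R]_p) (B : 'M[R]_m)
    (a b : R) :
  char_poly (block_mx A (const_mx a) (const_mx b) B) =
  char_poly A * char_poly B - (a * b)%:P * coronal_num A * coronal_num B.
Proof.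
apply/eqP; rewrite -tofrac_eq; apply/eqP.
have cpm_block : char_poly_mx (block_mx A (const_mx a) (const_mx b) B) =
    block_mx (char_poly_mx A) (const_mx (- a%:P)) (const_mx (- b%:P))
             (char_poly_mx B).
  rewrite /char_poly_mx scalar_mx_block map_block_mx opp_block_mx add_block_mx.
  by congr block_mx; apply/matrixP => i j; rewrite !mxE sub0r.
have det_tofrac k (M : 'M[R]_k) :
  \det (map_mx (@tofrac _) (char_poly_mx M)) = (char_poly M)%:F.
  by rewrite det_map_mx.
have const_tofrac k l (x : R) :
  map_mx (@tofrac _) (const_mx (- x%:P) : 'M_(k, l)) = const_mx (- (x%:P)%:F).
  by apply/matrixP => i j; rewrite !mxE rmorphN.
rewrite /char_poly -det_map_mx cpm_block map_block_mx !const_tofrac.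
rewrite det_block_const ?char_poly_mx_unit // !det_tofrac.
have total_coronal k (M : 'M[R]_k) :
  mxtotal (invmx (map_mx (@tofrac _) (char_poly_mx M))) = coronal M by [].
rewrite !total_coronal !coronalE tofracB !tofracM polyCM tofracM mulrNN.
have schur_frac (K : fieldType) (d1 d2 u v x y : K) : d1 != 0 -> d2 != 0 ->
    d1 * d2 * (1 - u * v * (x / d1) * (y / d2)) = d1 * d2 - u * v * x * y.
  by move=> nz1 nz2; field; rewrite nz1 nz2.
have nzA : (char_poly A)%:F != 0 by rewrite tofrac_eq0 monic_neq0 ?char_poly_monic.
have nzB : (char_poly B)%:F != 0 by rewrite tofrac_eq0 monic_neq0 ?char_poly_monic.
exact: schur_frac nzA nzB.
Qed.

Lemma char_poly_mx_add_scalar (R : comNzRingType) n (A : 'M[R]_n) (s : R) :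
  char_poly_mx (A + s%:M) = map_mx (comp_poly ('X - s%:P)) (char_poly_mx A).
Proof.
apply/matrixP => i j; rewrite !mxE raddfB /= comp_polyC raddfMn /= comp_polyX.
case: (i == j); rewrite /= ?mulr1n ?mulr0n ?addr0 ?sub0r ?polyCD ?opprD ?addrA //.
by rewrite -!addrA [- _ + _]addrC.
Qed.

Lemma char_poly_add_scalar (R : comNzRingType) n (A : 'M[R]_n) (s : R) :
  char_poly (A + s%:M) = char_poly A \Po ('X - s%:P).
Proof. by rewrite /char_poly char_poly_mx_add_scalar det_map_mx. Qed.

Lemma coronal_num_add_scalar (R : comNzRingType) n (A : 'M[R]_n) (s : R) :
  coronal_num (A + s%:M) = coronal_num A \Po ('X - s%:P).
Proof.
rewrite /coronal_num /mxtotal char_poly_mx_add_scalar -map_mx_adj rmorph_sum.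
by apply: eq_bigr => i _; rewrite rmorph_sum; apply: eq_bigr => j _; rewrite mxE.
Qed.

Lemma split_lshift p m (i : 'I_p) : split (lshift m i) = inl i.
Proof. exact: (unsplitK (inl i)). Qed.

Lemma split_rshift p m (i : 'I_m) : split (rshift p i) = inr i.
Proof. exact: (unsplitK (inr i)). Qed.

Lemma card_gjoin_lshift p m (e : rel 'I_p) (f : rel 'I_m) (a : 'I_p) :
  #|[set k | gjoin e f (lshift m a) k]| = (#|[set k | e a k]| + m)%N.
Proof.
rewrite -!sum1dep_card big_split_ord /=; congr (_ + _)%N.
  by apply: eq_bigl => i; rewrite /gjoin !split_lshift.
rewrite (eq_bigl predT) ?sum1_card ?card_ord // => i.
by rewrite /gjoin split_lshift split_rshift.
Qed.

Lemma card_gjoin_rshift p m (e : rel 'I_p) (f : rel 'I_m) (a : 'I_m) :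
  #|[set k | gjoin e f (rshift p a) k]| = (p + #|[set k | f a k]|)%N.
Proof.
rewrite -!sum1dep_card big_split_ord /=; congr (_ + _)%N.
  rewrite (eq_bigl predT) ?sum1_card ?card_ord // => i.
  by rewrite /gjoin split_lshift split_rshift.
by apply: eq_bigl => i; rewrite /gjoin !split_rshift.
Qed.

Lemma Aalpha_gjoin (R : comNzRingType) (alpha : R) p m
    (e : rel 'I_p) (f : rel 'I_m) :
  Aalpha alpha (gjoin e f) =
  block_mx (Aalpha alpha e + (alpha * m%:R)%:M) (const_mx (1 - alpha))
           (const_mx (1 - alpha)) (Aalpha alpha f + (alpha * p%:R)%:M).
Proof.
apply/matrixP => i j; rewrite -(splitK i) -(splitK j).
case: (split i) => a; case: (split j) => b /=.
- rewrite block_mxEul !mxE card_gjoin_lshift /gjoin !split_lshift eq_lshift.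
  by case: (a == b); rewrite /= ?mulr1n ?mulr0n ?natrD; ring.
- by rewrite block_mxEur !mxE /gjoin split_lshift split_rshift eq_lrshift /=; ring.
- by rewrite block_mxEdl !mxE /gjoin split_lshift split_rshift eq_rlshift /=; ring.
- rewrite block_mxEdr !mxE card_gjoin_rshift /gjoin !split_rshift eq_rshift.
  by case: (a == b); rewrite /= ?mulr1n ?mulr0n ?natrD; ring.
Qed.

Lemma cospectral_size (R : comNzRingType) n m (A : 'M[R]_n) (B : 'M[R]_m) :
  cospectral A B -> n = m.
Proof. by move=> eAB; have := size_char_poly A; rewrite eAB size_char_poly => -[]. Qed.

Lemma cospectral_gjoin (R : idomainType) (alpha : R) p1 p2 n1 n2
    (G1 : rel 'I_p1) (G2 : rel 'I_p2) (H1 : rel 'I_n1) (H2 : rel 'I_n2) :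
  cospectral (Aalpha alpha G1) (Aalpha alpha G2) ->
  coronal (Aalpha alpha G1) = coronal (Aalpha alpha G2) ->
  cospectral (Aalpha alpha H1) (Aalpha alpha H2) ->
  coronal (Aalpha alpha H1) = coronal (Aalpha alpha H2) ->
  cospectral (Aalpha alpha (gjoin G1 H1)) (Aalpha alpha (gjoin G2 H2)).
Proof.
move=> cG corG cH corH.
have ep := cospectral_size cG; have en := cospectral_size cH; subst p2 n2.
rewrite /cospectral !Aalpha_gjoin !char_poly_block_const.
rewrite !char_poly_add_scalar !coronal_num_add_scalar.
by rewrite cG cH (coronal_num_eq cG corG) (coronal_num_eq cH corH).
Qed.

Theorem corollary3p2 (R : realFieldType) (alpha : R)
    (ha0 : 0 <= alpha) (ha1 : alpha <= 1) :
  (forall (p n1 n2 : nat) (G : rel 'I_p) (H1 : rel 'I_n1) (H2 : rel 'I_n2),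
     is_graph G -> is_graph H1 -> is_graph H2 ->
     cospectral (Aalpha alpha H1) (Aalpha alpha H2) ->
     coronal (Aalpha alpha H1) = coronal (Aalpha alpha H2) ->
     cospectral (Aalpha alpha (gjoin G H1)) (Aalpha alpha (gjoin G H2)))
  /\
  (forall (p1 p2 n1 n2 : nat) (G1 : rel 'I_p1) (G2 : rel 'I_p2)
          (H1 : rel 'I_n1) (H2 : rel 'I_n2),
     is_graph G1 -> is_graph G2 -> is_graph H1 -> is_graph H2 ->
     cospectral (Aalpha alpha G1) (Aalpha alpha G2) ->
     coronal (Aalpha alpha G1) = coronal (Aalpha alpha G2) ->
     cospectral (Aalpha alpha H1) (Aalpha alpha H2) ->
     coronal (Aalpha alpha H1) = coronal (Aalpha alpha H2) ->
     cospectral (Aalpha alpha (gjoin G1 H1)) (Aalpha alpha (gjoin G2 H2))).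
Proof.
split=> [p n1 n2 G H1 H2 _ _ _ | p1 p2 n1 n2 G1 G2 H1 H2 _ _ _ _].
  exact: cospectral_gjoin.
exact: cospectral_gjoin.
Qed.
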